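(* Let $0\le a\le 1$. Then for every $v>0$, $$\int_0^a \frac{e^{-vu}\,u\, du}{\log^2 u+1}\approx \frac{1}{(v+1/a)^2\bigl(\log^2 (v+1/a)+1\bigr)}.$$ If additionally $av\le 1$, then $$\int_a^1 \frac{e^{-vu}\,u^{1/2}\, du}{1-\log u}\approx \frac{1-a}{(v+1)^{3/2}\bigl(1+\log (v+1)\bigr)}.$$
   Context: $f\approx g$ means $c^{-1}g\le f\le cg$ for an absolute constant $c>0$, uniformly over the indicated $a$ and $v$. *)

From HB Require Import structures.
From mathcomp Require Import all_boot all_order all_algebra.
From mathcomp Require Import all_classical all_reals all_analysis.
Set Implicit Arguments. Unset Strict Implicit. Unset Printing Implicit Defensive.
Import Order.TTheory GRing.Theory Num.Theory.
Local Open Scope ring_scope.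
Local Open Scope classical_set_scope.

Definition f1 (R : realType) (v u : R) : R :=
  expR (- (v * u)) * u / ((ln u) ^+ 2 + 1).

Definition f2 (R : realType) (v u : R) : R :=
  expR (- (v * u)) * Num.sqrt u / (1 - ln u).

(* Right-hand side of the first estimate; for a = 0 we have v + 1/a = +oo and
   the expression is interpreted as its limit 0. *)
Definition g1 (R : realType) (a v : R) : R :=
  if a == 0 then 0
  else 1 / ((v + a^-1) ^+ 2 * ((ln (v + a^-1)) ^+ 2 + 1)).

Definition g2 (R : realType) (a v : R) : R :=
  (1 - a) / (Num.sqrt (v + 1) ^+ 3 * (1 + ln (v + 1))).

From HB Require Import structures.
From mathcomp Require Import all_boot all_order all_algebra.
From mathcomp Require Import all_classical all_reals all_analysis.
From mathcomp Require Import ring lra.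
Set Implicit Arguments. Unset Strict Implicit. Unset Printing Implicit Defensive.
Import Order.TTheory GRing.Theory Num.Theory.
Local Open Scope ring_scope.
Local Open Scope classical_set_scope.

(* Both integrands are [e^{-vu} w(u)] for a weight [w] on [0, 1] that is nondecreasing,
   vanishes at 0, grows at most quadratically ([w u <= K (u/b)^2 w b] for [b <= u]) and
   does not collapse under halving ([w b <= C w (b/2)]).  With [b = 1/(v + 1/a)], resp.
   [b = 1/(v + 1)], the right-hand sides are [b w(b)], resp. [(1 - a) b w(b)].
   Lower bound: on a subinterval of length [b/2], resp. [(1 - a) b/2], lying above [b/2]
   and where [vu <= 2], the integrand is at least [e^{-2} w(b) / C].
   Upper bound: there [u/b <= vu + 1], so [w u <= K w(b) (1 + (u/b)^2)] and the quadratic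
   factor is absorbed by half of the exponential; the integral of [e^{-vu/2}] over an
   interval of length [L] is at most [min(L, 2/v) <= 2L/(1 + vL/2)], which is [O(b)],
   resp. [O((1 - a) b)] thanks to [av <= 1]. *)

Section exponential_integrals.
Context {R : realType}.
Notation mu := (@lebesgue_measure R).

Lemma measurable_funV_gt0 (D : set R) (f : R -> R) :
  measurable_fun D f -> (forall x, D x -> 0 < f x) ->
  measurable_fun D (fun x => (f x)^-1).
Proof.
move=> mf f_gt0.
apply: (@eq_measurable_fun _ _ _ _ _ (fun x => expR (- ln (f x)))).
  by move=> x; rewrite inE => Dx; rewrite expRN lnK ?posrE ?f_gt0.
apply: measurableT_comp; first exact: measurable_realfun.measurable_expR.
apply: measurable_realfun.measurable_funN.
exact: measurableT_comp (@measurable_realfun.measurable_ln R) mf.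
Qed.

Lemma measurable_expRNM (v : R) : measurable_fun setT (fun u : R => expR (- (v * u))).
Proof.
apply: measurableT_comp; first exact: measurable_realfun.measurable_expR.
exact/measurable_realfun.measurable_funN/measurable_realfun.measurable_funM.
Qed.

Lemma lebesgue_measure_itvcc (p q : R) : p <= q -> mu `[p, q] = (q - p)%:E.
Proof.
rewrite lebesgue_measure_itv /= lte_fin le_eqVlt => /predU1P[->|->//].
by rewrite ltxx subrr.
Qed.

Lemma integral_itv_le_cst (p q k : R) (f : R -> R) : p <= q ->
  measurable_fun `[p, q] f -> (forall x, p <= x <= q -> 0 <= f x <= k) ->
  (\int[mu]_(x in `[p, q]) (f x)%:E <= (k * (q - p))%:E)%E.
Proof.
move=> pq mf fk.
have fk' x : `[p, q] x -> 0 <= f x <= k by rewrite /= in_itv /=; exact: fk.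
apply: (@le_trans _ _ (\int[mu]_(x in `[p, q]) (cst k%:E) x)%E).
  apply: ge0_le_integral => //.
  - by move=> x /fk' /andP[].
  - exact/measurable_realfun.measurable_EFinP.
  - by move=> x /fk' /andP[_]; rewrite lee_fin.
by rewrite integral_cst //= lebesgue_measure_itvcc // -EFinM.
Qed.

Lemma cst_le_integral_itv (A : set R) (p q k : R) (f : R -> R) :
  measurable A -> `[p, q] `<=` A -> p <= q -> measurable_fun A f ->
  (forall x, A x -> 0 <= f x) -> 0 <= k -> (forall x, p <= x <= q -> k <= f x) ->
  ((k * (q - p))%:E <= \int[mu]_(x in A) (f x)%:E)%E.
Proof.
move=> mA pqA pq mf f_ge0 k_ge0 kf.
have mfpq : measurable_fun `[p, q] f := measurable_funS mA pqA mf.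
apply: (@le_trans _ _ (\int[mu]_(x in `[p, q]) (f x)%:E)%E).
  rewrite EFinM -lebesgue_measure_itvcc // -integral_cst //.
  apply: ge0_le_integral => //; first exact/measurable_realfun.measurable_EFinP.
apply: ge0_subset_integral => //; first exact/measurable_realfun.measurable_EFinP.
Qed.

Lemma integral_expR_le_inv (r q : R) : 0 < r -> 0 < q ->
  (\int[mu]_(u in `[0%R, q]) (expR (- (r * u)))%:E <= (r^-1)%:E)%E.
Proof.
move=> r_gt0 q_gt0.
have -> : (\int[mu]_(u in `[0%R, q]) (expR (- (r * u)))%:E =
    \int[mu]_(u in `[0%R, q]) ((r^-1)%:E * (exponential_pdf r u)%:E))%E.
  apply: eq_integral => u; rewrite inE /= in_itv /= => /andP[u_ge0 _].
  by rewrite -EFinM exponential_pdfE // mulrA mulVf ?gt_eqF // mul1r mulNr.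
have pdf_ge0 u : (0 <= (exponential_pdf r u)%:E)%E.
  by rewrite lee_fin exponential_pdf_ge0 // ltW.
rewrite ge0_integralZl_EFin //; last 2 first.
- apply/measurable_realfun.measurable_EFinP/measurable_funTS.
  exact: measurable_exponential_pdf.
- by rewrite invr_ge0 ltW.
rewrite -[leRHS]mule1 lee_pmul //; first by rewrite lee_fin invr_ge0 ltW.
  exact: integral_ge0.
have := exponential_prob_itv0c r q_gt0; rewrite /exponential_prob => ->.
by rewrite -EFinB lee_fin gerBl expR_ge0.
Qed.

Lemma integral_expR_itv_le (r p q : R) : 0 < r -> 0 <= p -> p <= q ->
  (\int[mu]_(u in `[p, q]) (expR (- (r * u)))%:E <=
     (2 * (q - p) / (1 + r * (q - p)))%:E)%E.
Proof.
move=> r_gt0 p_ge0 pq.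
have q_ge0 : 0 <= q by apply: le_trans pq.
have rL_ge0 : 0 <= r * (q - p) by rewrite mulr_ge0 ?subr_ge0 // ltW.
have den_gt0 : 0 < 1 + r * (q - p) by lra.
have mexp : measurable_fun `[p, q] (fun u => expR (- (r * u))).
  exact: measurable_funTS (measurable_expRNM r).
have le_len : (\int[mu]_(u in `[p, q]) (expR (- (r * u)))%:E <= (1 * (q - p))%:E)%E.
  apply: integral_itv_le_cst => // u /andP[pu _].
  have u_ge0 : 0 <= u by lra.
  by rewrite expR_ge0 expR_le1 oppr_le0 mulr_ge0 // ltW.
have le_inv : (\int[mu]_(u in `[p, q]) (expR (- (r * u)))%:E <= (r^-1)%:E)%E.
  have q1_gt0 : 0 < q + 1 by lra.
  have := integral_expR_le_inv r_gt0 q1_gt0; apply: le_trans.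
  apply: ge0_subset_integral => //.
    by apply/measurable_realfun.measurable_EFinP/measurable_funTS; exact: measurable_expRNM.
  by apply: subset_itv; rewrite bnd_simp //; lra.
have [short|long] := leP (r * (q - p)) 1.
  by apply: le_trans le_len _; rewrite lee_fin mul1r ler_pdivlMr //; nra.
apply: le_trans le_inv _; rewrite lee_fin ler_pdivlMr // mulrDr mulr1 mulrA mulVf ?gt_eqF //.
by rewrite mul1r -(ler_pM2l r_gt0) mulrDr mulfV ?gt_eqF //; lra.
Qed.

Lemma integral_le_expR (r K p q : R) (f : R -> R) :
  0 < r -> 0 <= K -> 0 <= p -> p <= q -> measurable_fun `[p, q] f ->
  (forall x, p <= x <= q -> 0 <= f x <= K * expR (- (r * x))) ->
  (\int[mu]_(x in `[p, q]) (f x)%:E <= (K * (2 * (q - p) / (1 + r * (q - p))))%:E)%E.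
Proof.
move=> r_gt0 K_ge0 p_ge0 pq mf fK.
have fK' x : `[p, q] x -> 0 <= f x <= K * expR (- (r * x)) by rewrite /= in_itv /=; exact: fK.
apply: (@le_trans _ _ (\int[mu]_(x in `[p, q]) (K * expR (- (r * x)))%:E)%E).
  apply: ge0_le_integral => //.
  - by move=> x /fK' /andP[].
  - exact/measurable_realfun.measurable_EFinP.
  - apply/measurable_realfun.measurable_EFinP/measurable_funTS.
    by apply: measurable_realfun.measurable_funM => //; exact: measurable_expRNM.
  - by move=> x /fK' /andP[_]; rewrite lee_fin.
under eq_integral do rewrite EFinM.
rewrite ge0_integralZl_EFin //; last first.
  by apply/measurable_realfun.measurable_EFinP/measurable_funTS; exact: measurable_expRNM.
by rewrite EFinM lee_pmul ?lee_fin // ?integral_ge0 // integral_expR_itv_le.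
Qed.

Lemma Rintegral_between (D : set R) (f : R -> R) (l u : R) :
  (l%:E <= \int[mu]_(x in D) (f x)%:E)%E -> (\int[mu]_(x in D) (f x)%:E <= u%:E)%E ->
  l <= Rintegral mu D f <= u.
Proof.
move=> lI Iu; have fin_I : (\int[mu]_(x in D) (f x)%:E)%E \is a fin_num.
  by rewrite fin_numElt (lt_le_trans (ltNyr l)) // (le_lt_trans Iu) ?ltry.
by rewrite -2!lee_fin /Rintegral fineK // lI Iu.
Qed.
End exponential_integrals.

Section expR_bounds.
Context {R : realType}.

Lemma expR_ge_sqr (y : R) : 0 <= y -> 2 + y ^+ 2 <= 2 * expR y.
Proof.
move=> y_ge0; have := expR_ge1Dxn 1 y_ge0.
by rewrite (_ : 2`!%:R = 2 :> R) //; lra.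
Qed.

Lemma expR_sqr_decay (y s : R) : 0 <= y -> 0 <= s -> s <= y + 1 ->
  expR (- y) * (1 + s ^+ 2) <= 24 * expR (- (y / 2)).
Proof.
move=> y_ge0 s_ge0 sy.
have half := expR_ge_sqr (divr_ge0 y_ge0 (ler0n _ 2)).
have splitE : expR (- y) = expR (- (y / 2)) * expR (- (y / 2)).
  by rewrite -expRD; congr expR; field.
have cancel : expR (- (y / 2)) * expR (y / 2) = 1 by rewrite -expRD addNr expR0.
have e_gt0 := expR_gt0 (- (y / 2)).
have s_le : 1 + s ^+ 2 <= 24 * expR (y / 2).
  have sq : (y / 2) ^+ 2 = y ^+ 2 / 4 by field.
  have s2 : s ^+ 2 <= (y + 1) ^+ 2 by rewrite ler_sqr ?nnegrE; lra.
  have := sqr_ge0 (y - 1); rewrite sq in half; nra.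
rewrite splitE -mulrA; apply: le_trans (ler_wpM2l (ltW e_gt0) (ler_wpM2l (ltW e_gt0) s_le)) _.
by rewrite [X in _ * X]mulrCA cancel mulr1 mulrC.
Qed.

End expR_bounds.

Section exponentially_damped_weight.
Context {R : realType}.
Notation mu := (@lebesgue_measure R).
Variables (w : R -> R) (K C : R).
Hypothesis w_meas : measurable_fun (`[0%R, 1%R] : set R) w.
Hypothesis w0 : w 0 = 0.
Hypothesis w_homo : forall x y, 0 <= x -> x <= y -> y <= 1 -> w x <= w y.
Hypothesis w_growth :
  forall b u, 0 < b -> b <= u -> u <= 1 -> w u <= K * (u / b) ^+ 2 * w b.
Hypothesis C_gt0 : 0 < C.
Hypothesis w_halve : forall b, 0 < b -> b <= 1 -> w b <= C * w (b / 2).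

Let w_ge0 x : 0 <= x -> x <= 1 -> 0 <= w x.
Proof. by move=> x_ge0 x_le1; rewrite -w0 w_homo. Qed.

Let w_le_Kw b : 0 < b -> b <= 1 -> w b <= K * w b.
Proof.
by move=> b_gt0 b_le1; have := w_growth b_gt0 (lexx b) b_le1; rewrite divff ?gt_eqF // expr1n mulr1.
Qed.

Let Kw_ge0 b : 0 < b -> b <= 1 -> 0 <= K * w b.
Proof. by move=> b_gt0 b_le1; apply: le_trans (w_le_Kw b_gt0 b_le1); rewrite w_ge0 // ltW. Qed.

Lemma weight_le_sqr b u : 0 < b -> b <= 1 -> 0 <= u -> u <= 1 ->
  w u <= K * w b * (1 + (u / b) ^+ 2).
Proof.
move=> b_gt0 b_le1 u_ge0 u_le1.
have wb_ge0 := w_ge0 (ltW b_gt0) b_le1.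
have ub_ge0 := sqr_ge0 (u / b).
have wb_le := w_le_Kw b_gt0 b_le1.
have [ub|bu] := leP u b.
  have := w_homo u_ge0 ub b_le1; nra.
have := w_growth b_gt0 (ltW bu) u_le1; nra.
Qed.

Lemma expR_weight_le v b x : 0 <= v -> 0 < b -> b <= 1 -> 0 <= x -> x <= 1 ->
  x / b <= v * x + 1 -> expR (- (v * x)) * w x <= 24 * K * w b * expR (- (v / 2 * x)).
Proof.
move=> v_ge0 b_gt0 b_le1 x_ge0 x_le1 xb.
have wb_ge0 := w_ge0 (ltW b_gt0) b_le1.
have decay := expR_sqr_decay (mulr_ge0 v_ge0 x_ge0) (divr_ge0 x_ge0 (ltW b_gt0)) xb.
have := weight_le_sqr b_gt0 b_le1 x_ge0 x_le1.
rewrite (_ : v / 2 * x = v * x / 2); last by rewrite mulrAC.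
have := expR_ge0 (- (v * x)); have := Kw_ge0 b_gt0 b_le1.
nra.
Qed.

Lemma weight_ge_halve b x : 0 < b -> b <= 1 -> b / 2 <= x -> x <= 1 -> w b / C <= w x.
Proof.
move=> b_gt0 b_le1 bx x_le1.
rewrite ler_pdivrMr // mulrC; apply: le_trans (w_halve b_gt0 b_le1) _.
by rewrite ler_pM2l // w_homo //; lra.
Qed.

Let measurable_damped (v : R) (A : set R) : A `<=` `[0%R, 1%R] ->
  measurable_fun A (fun x => expR (- (v * x)) * w x).
Proof.
move=> A01; apply: measurable_funS A01 _ => //.
apply: measurable_realfun.measurable_funM => //.
exact: measurable_funTS (measurable_expRNM v).
Qed.

Lemma integral_expR_weight_le v b p q :
  0 < v -> 0 < b -> b <= 1 -> 0 <= p -> p <= q -> q <= 1 ->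
  (forall x, p <= x <= q -> x / b <= v * x + 1) ->
  (\int[mu]_(x in `[p, q]) (expR (- (v * x)) * w x)%:E <=
    (24 * K * w b * (2 * (q - p) / (1 + v / 2 * (q - p))))%:E)%E.
Proof.
move=> v_gt0 b_gt0 b_le1 p_ge0 pq q_le1 xb.
apply: integral_le_expR => //.
- by rewrite divr_gt0.
- by rewrite -mulrA mulr_ge0 ?Kw_ge0.
- have pq01 : `[p, q] `<=` (`[0%R, 1%R] : set R).
    by apply: subset_itv; rewrite bnd_simp.
  exact: measurable_damped pq01.
- move=> x /andP[px xq].
  have x_ge0 : 0 <= x by lra.
  have x_le1 : x <= 1 by lra.
  rewrite mulr_ge0 ?expR_ge0 ?w_ge0 //=.
  apply: expR_weight_le => //; first exact: ltW.
  by apply: xb; rewrite px xq.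
Qed.

Lemma integral_expR_weight_ge (A : set R) v b p q :
  measurable A -> `[p, q] `<=` A -> A `<=` `[0%R, 1%R] ->
  0 <= v -> 0 < b -> b <= 1 -> b / 2 <= p -> p <= q -> v * q <= 2 ->
  ((expR (-2) * (w b / C) * (q - p))%:E <=
    \int[mu]_(x in A) (expR (- (v * x)) * w x)%:E)%E.
Proof.
move=> mA pqA A01 v_ge0 b_gt0 b_le1 bp pq vq.
apply: cst_le_integral_itv => //.
- exact: measurable_damped.
- move=> x /A01; rewrite /= in_itv /= => /andP[x_ge0 x_le1].
  by rewrite mulr_ge0 ?expR_ge0 ?w_ge0.
- by rewrite !mulr_ge0 ?expR_ge0 ?invr_ge0 ?w_ge0 // ltW.
- move=> x /andP[px xq].
  have x_ge0 : 0 <= x by lra.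
  have : `[0%R, 1%R] x by apply/A01/pqA; rewrite /= in_itv /= px xq.
  rewrite /= in_itv /= => /andP[_ x_le1].
  apply: ler_pM.
  - exact: expR_ge0.
  - by rewrite divr_ge0 ?w_ge0 // ltW.
  - by rewrite ler_expR lerN2; nra.
  - by apply: weight_ge_halve; lra.
Qed.

End exponentially_damped_weight.

Section weights.
Context {R : realType}.

Lemma ler_pdiv_cross (x y D D' : R) : 0 < D -> 0 < D' ->
  (x / D <= y / D') = (x * D' <= y * D).
Proof. by move=> D_gt0 D'_gt0; rewrite ler_pdivrMr // mulrAC ler_pdivlMr. Qed.

Lemma ln2_ge0_le1 : 0 <= ln (2 : R) <= 1.
Proof.
rewrite ln_ge0 ?ler1n //=.
by have := @le_ln1Dx R 1 ltac:(lra); rewrite (_ : 1 + 1 = 2 :> R).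
Qed.

Lemma ln_half (b : R) : 0 < b -> ln (b / 2) = ln b - ln 2.
Proof. by move=> b_gt0; rewrite ln_div // posrE. Qed.

Lemma expR_ln_ratio (u b : R) : 0 < u -> 0 < b -> expR (ln u - ln b) = u / b.
Proof. by move=> u_gt0 b_gt0; rewrite expRB !lnK. Qed.

Definition weight1 (u : R) : R := u / (ln u ^+ 2 + 1).

Let den1_gt0 (u : R) : 0 < ln u ^+ 2 + 1.
Proof. by rewrite ltr_pwDr ?sqr_ge0. Qed.

Lemma measurable_weight1 : measurable_fun (`[0%R, 1%R] : set R) weight1.
Proof.
apply: measurable_funTS; apply: measurable_realfun.measurable_funM => //.
apply: measurable_funV_gt0 => [|x _]; last exact: den1_gt0.
apply: measurable_realfun.measurable_funD => //.
by apply: measurable_realfun.measurable_funX; exact: measurable_realfun.measurable_ln.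
Qed.

Lemma weight1_0 : weight1 0 = 0.
Proof. by rewrite /weight1 mul0r. Qed.

Lemma weight1_homo x y : 0 <= x -> x <= y -> y <= 1 -> weight1 x <= weight1 y.
Proof.
rewrite le_eqVlt => /predU1P[<- y_ge0 _|x_gt0 xy y_le1].
  by rewrite weight1_0 divr_ge0 // addr_ge0 ?sqr_ge0.
have lnxy : ln x <= ln y by rewrite ler_ln ?posrE // (lt_le_trans x_gt0).
have sq : ln y ^+ 2 <= ln x ^+ 2 by have := ln_le0 y_le1; nra.
rewrite /weight1 ler_pdiv_cross //.
have := sqr_ge0 (ln x); nra.
Qed.

Lemma weight1_growth b u : 0 < b -> b <= u -> u <= 1 ->
  weight1 u <= 4 * (u / b) ^+ 2 * weight1 b.
Proof.
move=> b_gt0 bu u_le1; have u_gt0 := lt_le_trans b_gt0 bu.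
set t := ln u - ln b; set E := u / b.
have t_ge0 : 0 <= t by rewrite subr_ge0 ler_ln ?posrE.
have etE : expR t = E by rewrite expR_ln_ratio.
have tE : 1 + t ^+ 2 <= 2 * E by have := expR_ge_sqr t_ge0; rewrite etE; lra.
have uE : u = b * E by rewrite /E mulrC divfK ?gt_eqF.
have lnb : ln b = ln u - t by rewrite /t opprB addrC subrK.
have den : ln b ^+ 2 + 1 <= 4 * E * (ln u ^+ 2 + 1).
  have := sqr_ge0 (ln u + t); have := sqr_ge0 (ln u); rewrite lnb; nra.
rewrite /weight1 mulrA ler_pdiv_cross // {1}uE.
have E_ge0 : 0 <= E by rewrite divr_ge0 // ltW.
have := mulr_ge0 (ltW b_gt0) E_ge0; nra.
Qed.

Lemma weight1_halve b : 0 < b -> b <= 1 -> weight1 b <= 6 * weight1 (b / 2).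
Proof.
move=> b_gt0 b_le1; rewrite /weight1 mulrA ler_pdiv_cross // ln_half //.
have lb_le0 := ln_le0 b_le1; have /andP[l2_ge0 l2_le1] := ln2_ge0_le1.
have key : (ln b - ln 2) ^+ 2 + 1 <= 3 * (ln b ^+ 2 + 1).
  have : 0 <= - ln b * (1 - ln 2) by rewrite mulr_ge0 // ?oppr_ge0 ?subr_ge0.
  have := sqr_ge0 (ln b + 1); nra.
rewrite (_ : 6 * (b / 2) = 3 * b); last by field.
nra.
Qed.

Definition weight2 (u : R) : R := Num.sqrt u / (1 - ln u).

Let den2_ge1 (u : R) : u <= 1 -> 1 <= 1 - ln u.
Proof. by move=> u_le1; have := ln_le0 u_le1; lra. Qed.

Lemma measurable_weight2 : measurable_fun (`[0%R, 1%R] : set R) weight2.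
Proof.
apply: measurable_realfun.measurable_funM.
  exact: measurable_funTS (measurable_realfun.continuous_measurable_fun (@sqrt_continuous R)).
apply: measurable_funV_gt0 => [|x]; last first.
  by rewrite /= in_itv /= => /andP[_ /den2_ge1]; apply: lt_le_trans.
apply: measurable_realfun.measurable_funB => //.
exact: measurable_funTS (@measurable_realfun.measurable_ln R).
Qed.

Lemma weight2_0 : weight2 0 = 0.
Proof. by rewrite /weight2 sqrtr0 mul0r. Qed.

Lemma weight2_homo x y : 0 <= x -> x <= y -> y <= 1 -> weight2 x <= weight2 y.
Proof.
rewrite le_eqVlt => /predU1P[<- _ y_le1|x_gt0 xy y_le1].
  by rewrite weight2_0 divr_ge0 ?sqrtr_ge0 // (le_trans ler01) ?den2_ge1.
have lnxy : ln x <= ln y by rewrite ler_ln ?posrE // (lt_le_trans x_gt0).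
have sxy : Num.sqrt x <= Num.sqrt y by rewrite ler_sqrt // (le_trans (ltW x_gt0)).
have dy := den2_ge1 y_le1; have sx_ge0 := sqrtr_ge0 x.
by rewrite /weight2 ler_pdiv_cross; [nra|lra|lra].
Qed.

Lemma weight2_growth b u : 0 < b -> b <= u -> u <= 1 ->
  weight2 u <= 4 * (u / b) ^+ 2 * weight2 b.
Proof.
move=> b_gt0 bu u_le1; have u_gt0 := lt_le_trans b_gt0 bu.
set t := ln u - ln b; set E := u / b.
have t_ge0 : 0 <= t by rewrite subr_ge0 ler_ln ?posrE.
have tE : 1 + t <= E by rewrite -[E]expR_ln_ratio // expR_ge1Dx.
have uE : u = b * E by rewrite /E mulrC divfK ?gt_eqF.
have E_ge1 : 1 <= E by lra.
have sE : Num.sqrt E <= E.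
  by have := sqr_sqrtr (le_trans ler01 E_ge1); have := sqrtr_ge0 E; nra.
have lnb : ln b = ln u - t by rewrite /t opprB addrC subrK.
have du := den2_ge1 u_le1; have db := den2_ge1 (le_trans bu u_le1).
have sb_ge0 := sqrtr_ge0 b; have sE_ge0 := sqrtr_ge0 E.
have su : Num.sqrt u = Num.sqrt b * Num.sqrt E by rewrite uE sqrtrM // ltW.
rewrite /weight2 mulrA ler_pdiv_cross; [|lra|lra].
have step : 1 - (ln u - t) <= (1 - ln u) * E by nra.
rewrite su lnb; apply: le_trans (ler_wpM2l (mulr_ge0 sb_ge0 sE_ge0) step) _.
have : Num.sqrt b * Num.sqrt E <= Num.sqrt b * E by rewrite ler_wpM2l.
have DE_ge0 : 0 <= (1 - ln u) * E by rewrite mulr_ge0 //; lra.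
have : 0 <= Num.sqrt b * E * ((1 - ln u) * E).
  by apply: mulr_ge0 => //; apply: mulr_ge0 => //; lra.
nra.
Qed.

Lemma weight2_halve b : 0 < b -> b <= 1 -> weight2 b <= 6 * weight2 (b / 2).
Proof.
move=> b_gt0 b_le1.
have db := den2_ge1 b_le1; have dhalf : 1 <= 1 - ln (b / 2) by apply: den2_ge1; lra.
rewrite /weight2 mulrA ler_pdiv_cross; [|lra|lra].
have sb : Num.sqrt b = Num.sqrt (b / 2) * Num.sqrt 2.
  by rewrite -sqrtrM ?divfK // divr_ge0 ?ltW.
have s2_le2 : Num.sqrt (2 : R) <= 2.
  by have := sqr_sqrtr (ler0n R 2); have := sqrtr_ge0 (2 : R); nra.
have lb_le0 := ln_le0 b_le1; have /andP[l2_ge0 l2_le1] := ln2_ge0_le1.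
have shalf_ge0 := sqrtr_ge0 (b / 2); have s2_ge0 := sqrtr_ge0 (2 : R).
have key : Num.sqrt 2 * (1 - (ln b - ln 2)) <= 6 * (1 - ln b) by nra.
rewrite sb ln_half //; nra.
Qed.

End weights.

Section main_integrals.
Context {R : realType}.
Notation mu := (@lebesgue_measure R).

Lemma f1E (v : R) : f1 v = fun u => expR (- (v * u)) * weight1 u.
Proof. by apply/funext => u; rewrite /f1 /weight1 mulrA. Qed.

Lemma f2E (v : R) : f2 v = fun u => expR (- (v * u)) * weight2 u.
Proof. by apply/funext => u; rewrite /f2 /weight2 mulrA. Qed.

Lemma g1E (a v : R) : 0 < a -> 0 < v ->
  g1 a v = (v + a^-1)^-1 * weight1 (v + a^-1)^-1.
Proof.
move=> a_gt0 v_gt0; have w_gt0 : 0 < v + a^-1 by rewrite addr_gt0 ?invr_gt0.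
have D_gt0 : 0 < ln (v + a^-1) ^+ 2 + 1 by rewrite ltr_pwDr ?sqr_ge0.
rewrite /g1 gt_eqF // /weight1 lnV ?posrE // sqrrN; field.
have va_gt0 : 0 < v * a + 1 by have := mulr_gt0 v_gt0 a_gt0; lra.
by rewrite !gt_eqF.
Qed.

Lemma g2E (a v : R) : 0 <= v ->
  g2 a v = (1 - a) * ((v + 1)^-1 * weight2 (v + 1)^-1).
Proof.
move=> v_ge0; have w_gt0 : 0 < v + 1 by lra.
have S_gt0 : 0 < Num.sqrt (v + 1) by rewrite sqrtr_gt0.
rewrite /g2 /weight2 sqrtrV ?ltW // lnV ?posrE // opprK.
rewrite exprS sqr_sqrtr ?ltW //; field.
by rewrite !gt_eqF //; have := ln_ge0 (ler_wpDl v_ge0 (lexx 1)); lra.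
Qed.

Lemma g1_ge0 (a v : R) : 0 <= g1 a v.
Proof.
by rewrite /g1; case: eqP => // _; rewrite divr_ge0 // mulr_ge0 ?sqr_ge0 // addr_ge0 ?sqr_ge0.
Qed.

Lemma g2_ge0 (a v : R) : a <= 1 -> 0 <= v -> 0 <= g2 a v.
Proof.
move=> a_le1 v_ge0; have := ln_ge0 (ler_wpDl v_ge0 (lexx 1)).
by rewrite /g2 => L_ge0; rewrite divr_ge0 ?subr_ge0 // mulr_ge0 ?exprn_ge0 ?sqrtr_ge0 //; lra.
Qed.

Let damped1_le := @integral_expR_weight_le R _ _ measurable_weight1 weight1_0 weight1_homo
  weight1_growth.
Let damped1_ge := @integral_expR_weight_ge R _ _ measurable_weight1 weight1_0 weight1_homo
  (ltr0Sn R 5) weight1_halve.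

Lemma first_integral_bounds (a v : R) : 0 <= a -> a <= 1 -> 0 < v ->
  expR (-2) / 12 * g1 a v <= Rintegral mu `[0, a] (f1 v) <= 384 * g1 a v.
Proof.
rewrite le_eqVlt => /predU1P[<- _ _|a_gt0 a_le1 v_gt0].
  by rewrite /g1 eqxx set_itv1 Rintegral_set1 !mulr0 lexx.
rewrite f1E g1E //; set b := (v + a^-1)^-1.
have b_gt0 : 0 < b by rewrite invr_gt0 addr_gt0 ?invr_gt0.
have va_ge0 : 0 <= v * a by rewrite mulr_ge0 ?ltW.
have bE : b * (v * a + 1) = a by rewrite /b; field; rewrite !gt_eqF //; lra.
have b_le_a : b <= a by nra.
have b_le1 : b <= 1 := le_trans b_le_a a_le1.
have vb_le1 : v * b <= 1 by nra.
have wb_ge0 : 0 <= weight1 b by rewrite -weight1_0 weight1_homo // ltW.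
apply: Rintegral_between.
  have := damped1_ge (A := `[0%R, a]) (v := v) (b := b) (p := b / 2) (q := b)
    (measurable_itv _).
  rewrite (_ : expR (-2) / 12 * (b * weight1 b) = expR (-2) * (weight1 b / 6) * (b - b / 2)).
    apply=> //.
    - by apply: subset_itv; rewrite bnd_simp //; lra.
    - by apply: subset_itv; rewrite bnd_simp.
    - exact: ltW.
    - lra.
    - lra.
  by field.
apply: le_trans (damped1_le (p := 0) (q := a) v_gt0 b_gt0 b_le1 (lexx 0) (ltW a_gt0) a_le1 _) _.
  move=> x /andP[_ xa]; rewrite /b invrK mulrDr (mulrC x v) lerD2l.
  by rewrite ler_pdivrMr // mul1r.
rewrite lee_fin subr0.
have : 2 * a / (1 + v / 2 * a) <= 4 * b by rewrite ler_pdivrMr; nra.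
nra.
Qed.

Let damped2_le := @integral_expR_weight_le R _ _ measurable_weight2 weight2_0 weight2_homo
  weight2_growth.
Let damped2_ge := @integral_expR_weight_ge R _ _ measurable_weight2 weight2_0 weight2_homo
  (ltr0Sn R 5) weight2_halve.

Lemma second_integral_bounds (a v : R) : 0 <= a -> a <= 1 -> 0 < v -> a * v <= 1 ->
  expR (-2) / 12 * g2 a v <= Rintegral mu `[a, 1] (f2 v) <= 384 * g2 a v.
Proof.
move=> a_ge0 a_le1 v_gt0 av_le1.
rewrite f2E g2E; last exact: ltW.
set b := (v + 1)^-1.
have b_gt0 : 0 < b by rewrite invr_gt0; lra.
have bE : b * (v + 1) = 1 by rewrite mulVf // gt_eqF //; lra.
have b_le1 : b <= 1 by nra.
have vb_le1 : v * b <= 1 by nra.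
have wb_ge0 : 0 <= weight2 b by rewrite -weight2_0 weight2_homo // ltW.
have ab_ge0 : 0 <= (1 - a) * b by rewrite mulr_ge0 ?subr_ge0 // ltW.
apply: Rintegral_between.
  have := damped2_ge (A := `[a, 1%R]) (v := v) (b := b)
    (p := a + (1 - a) * b / 2) (q := a + (1 - a) * b) (measurable_itv _).
  rewrite (_ : expR (-2) / 12 * ((1 - a) * (b * weight2 b)) =
    expR (-2) * (weight2 b / 6) * (a + (1 - a) * b - (a + (1 - a) * b / 2))); last by field.
  apply=> //.
  - by apply: subset_itv; rewrite bnd_simp; nra.
  - by apply: subset_itv; rewrite bnd_simp.
  - exact: ltW.
  - nra.
  - lra.
  - nra.
apply: le_trans (damped2_le (p := a) (q := 1) v_gt0 b_gt0 b_le1 a_ge0 a_le1 (lexx 1) _) _.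
  move=> x /andP[_ x_le1]; rewrite /b invrK mulrDr mulr1 (mulrC x v) lerD2l //.
rewrite lee_fin.
have : 2 * (1 - a) / (1 + v / 2 * (1 - a)) <= 4 * ((1 - a) * b).
  by rewrite ler_pdivrMr; nra.
nra.
Qed.

End main_integrals.

Lemma bounds_weaken (R : realFieldType) (c l u g x : R) : 0 <= g -> c^-1 <= l -> u <= c ->
  l * g <= x <= u * g -> c^-1 * g <= x <= c * g.
Proof.
move=> g_ge0 cl uc /andP[lx xu].
by rewrite (le_trans (ler_wpM2r g_ge0 cl) lx) (le_trans xu (ler_wpM2r g_ge0 uc)).
Qed.

Theorem mainTheorem11 (R : realType) :
  exists c : R, 0 < c /\
    forall a v : R, 0 <= a -> a <= 1 -> 0 < v ->
      (c^-1 * g1 a v <= Rintegral lebesgue_measure `[0, a] (f1 v) /\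
       Rintegral lebesgue_measure `[0, a] (f1 v) <= c * g1 a v) /\
      (a * v <= 1 ->
       c^-1 * g2 a v <= Rintegral lebesgue_measure `[a, 1] (f2 v) /\
       Rintegral lebesgue_measure `[a, 1] (f2 v) <= c * g2 a v).
Proof.
exists (384 * expR 2); split; first by rewrite mulr_gt0 ?expR_gt0.
move=> a v a_ge0 a_le1 v_gt0.
have e2_gt0 := expR_gt0 (-2 : R).
have c_inv : (384 * expR 2)^-1 = expR (-2) / 384 :> R by rewrite invfM expRN mulrC.
have c_ge : 384 <= 384 * expR 2 :> R by rewrite ler_peMr // -expR0 ler_expR.
have c_inv_le : (384 * expR 2)^-1 <= expR (-2) / 12 :> R by rewrite c_inv; lra.
split=> [|av_le1]; apply/andP; apply: (bounds_weaken _ c_inv_le c_ge).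
- exact: g1_ge0.
- exact: first_integral_bounds.
- exact: g2_ge0 (ltW v_gt0).
- exact: second_integral_bounds.
Qed.
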